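(* Let $G$ be a $\mathrm{sat}(n,K_{2,3})$-graph with $\delta(G) = 3$ such that for every vertex $\alpha$ of degree $3$, the three neighbors of $\alpha$ are pairwise adjacent (i.e., $\lambda(G) = 3$). Then $e(G) \geq 2n-2$.
   Context: All graphs are finite and simple. A graph $G$ is $K_{2,3}$-saturated if $G$ contains no subgraph isomorphic to $K_{2,3}$, but for every pair of nonadjacent vertices $u,v$, the graph $G+uv$ contains a subgraph isomorphic to $K_{2,3}$. $\mathrm{sat}(n,K_{2,3})$ is the minimum number of edges of a $K_{2,3}$-saturated graph on $n$ vertices, and a $\mathrm{sat}(n,K_{2,3})$-graph is a $K_{2,3}$-saturated graph on $n$ vertices with exactly $\mathrm{sat}(n,K_{2,3})$ edges. $e(G)$ is the number of edges and $\delta(G)$ the minimum degree of $G$. $\lambda(G) = \min\{e(G[N(\alpha)]) : d(\alpha) = 3\}$, the minimum number of edges induced by the neighborhood of a degree-$3$ vertex. *)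

From mathcomp Require Import all_boot.
Set Implicit Arguments. Unset Strict Implicit. Unset Printing Implicit Defensive.

Definition simple_graph (n : nat) (g : rel 'I_n) : Prop :=
  (forall x, ~~ g x x) /\ (forall x y, g x y = g y x).

Definition nedges (n : nat) (g : rel 'I_n) : nat :=
  #|[set p : 'I_n * 'I_n | (p.1 < p.2) && g p.1 p.2]|.

Definition deg (n : nat) (g : rel 'I_n) (x : 'I_n) : nat := #|[set y | g x y]|.

Definition min_degree_eq (n : nat) (g : rel 'I_n) (d : nat) : Prop :=
  (forall x, d <= deg g x) /\ (exists x, deg g x = d).

(* g contains a (not necessarily induced) subgraph isomorphic to K_{2,3} *)
Definition has_K23 (n : nat) (g : rel 'I_n) : Prop :=
  exists a1 a2 b1 b2 b3 : 'I_n,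
    uniq [:: a1; a2; b1; b2; b3] /\
    g a1 b1 /\ g a1 b2 /\ g a1 b3 /\ g a2 b1 /\ g a2 b2 /\ g a2 b3.

Definition add_edge (n : nat) (g : rel 'I_n) (u v : 'I_n) : rel 'I_n :=
  fun x y => [|| g x y, (x == u) && (y == v) | (x == v) && (y == u)].

Definition K23_saturated (n : nat) (g : rel 'I_n) : Prop :=
  simple_graph g /\ ~ has_K23 g /\
  (forall u v, u != v -> ~~ g u v -> has_K23 (add_edge g u v)).

Definition sat_K23_graph (n : nat) (g : rel 'I_n) : Prop :=
  K23_saturated g /\
  (forall h : rel 'I_n, K23_saturated h -> nedges g <= nedges h).

From mathcomp Require Import all_boot zify.
Set Implicit Arguments. Unset Strict Implicit. Unset Printing Implicit Defensive.

(* For a degree-3 vertex a the closed neighbourhood N[a] is a K4.  Two distinct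
   such K4's share at most one vertex (two shared vertices would have three
   common neighbours), and by saturation any two of them share at least one
   vertex: if a and b are nonadjacent, a centre of the K_{2,3} created by the
   edge ab is a or b, and this forces a common vertex of N[a] and N[b].  Hence a
   vertex lying in k of these K4's has degree at least 3k, and the union U of the
   q K4's has at most 4 + 3(q - 1) vertices.  The vertices outside U have degree
   at least 4, so 2e(G) >= 3 * 4q + 4(n - |U|) >= 4n - 4. *)

Definition incident (T : finType) (F : {set {set T}}) (x : T) : {set {set T}} :=
  [set Q in F | x \in Q].

Lemma leq_card_bigcup (T I : finType) (P : {pred I}) (F : I -> {set T}) :
  #|\bigcup_(i in P) F i| <= \sum_(i in P) #|F i|.
Proof.
apply: (big_rec2 (fun (U : {set T}) s => #|U| <= s)) => [|i U s _ IH].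
  by rewrite cards0.
by apply: leq_trans (leq_card_setU _ _).1 _; rewrite leq_add2l.
Qed.

Lemma sum_mem_card (T : finType) (A : {set T}) : \sum_x (x \in A) = #|A|.
Proof. by rewrite -sum1_card [RHS]big_mkcond; apply: eq_bigr => x _; case: (x \in A). Qed.

Lemma sum_card_incident (T : finType) (F : {set {set T}}) :
  \sum_x #|incident F x| = \sum_(Q in F) #|Q|.
Proof.
under eq_bigr do rewrite -sum1dep_card.
under [RHS]eq_bigr do rewrite -sum1_card.
rewrite (exchange_big_dep predT) //= [RHS]big_mkcond; apply: eq_bigr => Q _.
by case: (Q \in F) => //; rewrite big_pred0.
Qed.

Lemma sum_deg n (g : rel 'I_n) : simple_graph g -> \sum_v deg g v = 2 * nedges g.
Proof.
case=> g_irrefl g_sym.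
have -> : \sum_v deg g v = \sum_(p : 'I_n * 'I_n) g p.1 p.2.
  rewrite -(pair_bigA _ (fun x y => nat_of_bool (g x y))); apply: eq_bigr => x _.
  by rewrite /deg -sum_mem_card; apply: eq_bigr => y _; rewrite inE.
have -> : nedges g = \sum_(p : 'I_n * 'I_n) ((p.1 < p.2) && g p.1 p.2).
  by rewrite /nedges -sum_mem_card; apply: eq_bigr => p _; rewrite inE.
have swap_inj : injective (fun p : 'I_n * 'I_n => (p.2, p.1)) by move=> [? ?] [? ?] [-> ->].
rewrite mul2n -addnn [X in _ = _ + X](reindex_inj swap_inj) -big_split /=.
apply: eq_bigr => -[x y] _ /=; rewrite [g y x]g_sym.
case: (ltngtP x y) => [||xy] //=; rewrite ?addn0 //.
by rewrite (val_inj xy) (negbTE (g_irrefl y)).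
Qed.

Definition common n (g : rel 'I_n) (u w : 'I_n) : {set 'I_n} := [set c | g u c && g w c].

Definition closed_nbhd n (g : rel 'I_n) (a : 'I_n) : {set 'I_n} := a |: [set y | g a y].

Section CommonNeighbours.

Variables (n : nat) (g : rel 'I_n).

Lemma commonC u w : common g u w = common g w u.
Proof. by apply/setP => c; rewrite !inE andbC. Qed.

Lemma in_closed_nbhd a x : (x \in closed_nbhd g a) = (x == a) || g a x.
Proof. by rewrite !inE. Qed.

Lemma mem_closed_nbhd a : a \in closed_nbhd g a.
Proof. by rewrite in_closed_nbhd eqxx. Qed.

Lemma has_K23_common : has_K23 g -> exists u w, u != w /\ 2 < #|common g u w|.
Proof.
case=> [a1 [a2 [b1 [b2 [b3 [uniq_ab [g11 [g12 [g13 [g21 [g22 g23]]]]]]]]]]].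
move: uniq_ab; rewrite /= !inE !negb_or => /and5P[/and4P[a12 _ _ _] _ /andP[b12 b13] b23 _].
exists a1, a2; split => //; apply/card_gt2P; exists b1, b2, b3.
by rewrite !inE g11 g12 g13 g21 g22 g23 b12 b23 eq_sym b13.
Qed.

Lemma add_edgeC a b : add_edge g a b =2 add_edge g b a.
Proof. by move=> x y; rewrite /add_edge [_ && _ || _]orbC. Qed.

Lemma common_add_edgeC a b u w : common (add_edge g a b) u w = common (add_edge g b a) u w.
Proof. by apply/setP => c; rewrite !inE !(add_edgeC a b). Qed.

Lemma common_add_edge_off a b u w : u != a -> u != b -> w != a -> w != b ->
  common (add_edge g a b) u w = common g u w.
Proof.
by move=> /negbTE ua /negbTE ub /negbTE wa /negbTE wb; apply/setP => c;
  rewrite !inE /add_edge ua ub wa wb /= !orbF.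
Qed.

Lemma common_add_edge_end a b w : a != b -> w != a -> w != b ->
  common (add_edge g a b) a w = if g w b then b |: common g a w else common g a w.
Proof.
move=> /negbTE ab /negbTE wa /negbTE wb; apply/setP => c.
rewrite fun_if !inE /add_edge eqxx ab wa wb /= !orbF.
by have [->|/negbTE cb] := eqVneq c b; case gwb: (g w b);
  rewrite ?inE ?eqxx ?cb ?gwb /= ?orbF ?orbT ?andbF.
Qed.

Hypothesis g_irrefl : forall x, ~~ g x x.

Lemma common_has_K23 u w : u != w -> 2 < #|common g u w| -> has_K23 g.
Proof.
move=> uw /card_gt2P[x [y [z [[]]]]]; rewrite !inE.
move=> /andP[ux wx] /andP[uy wy] /andP[uz wz] [xy yz zx].
have neq a b : g a b -> a != b by apply: contraTneq => ->; exact: g_irrefl.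
exists u, w, x, y, z; split; last by [].
by rewrite /= !inE !negb_or uw !(neq u) ?(neq w) // xy yz eq_sym zx.
Qed.

Lemma common_add_edge_ends a b : a != b -> common (add_edge g a b) a b = common g a b.
Proof.
move=> ab; apply/setP => c; rewrite !inE /add_edge !eqxx [b == a]eq_sym (negbTE ab) /= !orbF.
have [->|_] := eqVneq c a; first by rewrite (negbTE (g_irrefl a)) (negbTE ab).
have [->|_] := eqVneq c b; first by rewrite (negbTE (g_irrefl b)) !andbF.
by rewrite !orbF.
Qed.

End CommonNeighbours.

Definition deg3_closed_nbhds n (g : rel 'I_n) : {set {set 'I_n}} :=
  [set closed_nbhd g a | a in [set a | deg g a == 3]].

Lemma mem_deg3_closed_nbhds n (g : rel 'I_n) Q :
  Q \in deg3_closed_nbhds g -> exists2 a, deg g a = 3 & Q = closed_nbhd g a.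
Proof. by case/imsetP => a; rewrite inE => /eqP deg_a ->; exists a. Qed.

Section Deg3ClosedNeighbourhoods.

Variables (n : nat) (g : rel 'I_n).
Hypothesis g_irrefl : forall x, ~~ g x x.
Hypothesis g_sym : forall x y, g x y = g y x.
Hypothesis g_K23free : ~ has_K23 g.
Hypothesis nbhd_clique :
  forall a, deg g a = 3 -> forall x y, g a x -> g a y -> x != y -> g x y.

Lemma card_common_le2 u w : u != w -> #|common g u w| <= 2.
Proof. by move=> uw; rewrite leqNgt; apply/negP => /(common_has_K23 g_irrefl uw). Qed.

Lemma card_closed_nbhd a : deg g a = 3 -> #|closed_nbhd g a| = 4.
Proof. by rewrite /deg => deg_a; rewrite cardsU1 inE g_irrefl deg_a. Qed.

Lemma closed_nbhd_clique a : deg g a = 3 ->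
  {in closed_nbhd g a &, forall u w, u != w -> g u w}.
Proof.
move=> deg_a u w; rewrite !in_closed_nbhd => /predU1P[->|au] /predU1P[->|aw] uw //.
- by rewrite eqxx in uw.
- by rewrite g_sym.
- exact: nbhd_clique deg_a _ _ au aw uw.
Qed.

Lemma card_closed_nbhd_nbrs a w : deg g a = 3 -> w \notin closed_nbhd g a ->
  #|closed_nbhd g a :&: [set y | g w y]| <= 1.
Proof.
move=> deg_a w_a; rewrite leqNgt; apply/negP.
move=> /card_gt1P[x [y [/setIP[x_a]]]]; rewrite inE => wx /setIP[y_a]; rewrite inE => wy xy.
(* w and the other two vertices of the K4 would be common neighbours of x, y. *)
have := card_common_le2 xy; apply/negP; rewrite -ltnNge.
have -> : 3 = #|w |: (closed_nbhd g a :\: [set x; y])|.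
  have xy_a : closed_nbhd g a :&: [set x; y] = [set x; y].
    by apply/setIidPr/subsetP => c /set2P[]->.
  by rewrite cardsU1 cardsD (card_closed_nbhd deg_a) xy_a cards2 xy inE (negbTE w_a) andbF.
apply: subset_leq_card; apply/subsetP => c /setU1P[->|/setDP[c_a]]; rewrite inE.
  by rewrite ![g _ w]g_sym wx wy.
rewrite !inE => /norP[]; rewrite ![c == _]eq_sym => xc yc.
by rewrite !(closed_nbhd_clique deg_a).
Qed.

Lemma card_closed_nbhdI a b : deg g a = 3 -> deg g b = 3 ->
  closed_nbhd g a != closed_nbhd g b -> #|closed_nbhd g a :&: closed_nbhd g b| <= 1.
Proof.
move=> deg_a deg_b neq_ab; rewrite leqNgt; apply/negP.
move=> /card_gt1P[x [y [/setIP[x_a x_b] /setIP[y_a y_b] xy]]].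
have [c c_b c_a] : exists2 c, c \in closed_nbhd g b & c \notin closed_nbhd g a.
  apply/subsetPn; apply: contra neq_ab => sub_ba; rewrite eq_sym eqEcard sub_ba.
  by rewrite (card_closed_nbhd deg_a) (card_closed_nbhd deg_b).
have := card_closed_nbhd_nbrs deg_a c_a; apply/negP; rewrite -ltnNge.
apply/card_gt1P; exists x, y; rewrite !inE -!in_closed_nbhd x_a y_a; split=> //.
- by apply: (closed_nbhd_clique deg_b) => //; apply: contraNneq c_a => ->.
- by apply: (closed_nbhd_clique deg_b) => //; apply: contraNneq c_a => ->.
Qed.

Lemma common_sub_closed_nbhd u w :
  common g u w \subset closed_nbhd g u :&: [set y | g w y].
Proof. by apply/subsetP => c; rewrite !inE => /andP[-> ->]; rewrite orbT. Qed.

Lemma closed_nbhds_meet_add_edge a b w : deg g a = 3 -> a != b -> a != w ->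
  2 < #|common (add_edge g a b) a w| -> closed_nbhd g a :&: closed_nbhd g b != set0.
Proof.
move=> deg_a ab aw; have [-> | wb] := eqVneq w b.
  rewrite common_add_edge_ends // -card_gt0 => /ltnW/ltnW/leq_trans; apply.
  apply/subset_leq_card/(subset_trans (common_sub_closed_nbhd a b))/setIS.
  by apply/subsetP => c; rewrite inE => gbc; rewrite in_closed_nbhd gbc orbT.
rewrite eq_sym in aw; rewrite common_add_edge_end //.
case: ifP => [gwb | _]; last by rewrite ltnNge card_common_le2 // eq_sym.
move=> common_aw; have w_a : w \in closed_nbhd g a.
  apply: contraTT common_aw => w_na; rewrite -leqNgt cardsU1.
  have := leq_trans (subset_leq_card (common_sub_closed_nbhd a w))
                    (card_closed_nbhd_nbrs deg_a w_na).
  lia.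
by apply/set0Pn; exists w; rewrite inE w_a in_closed_nbhd g_sym gwb orbT.
Qed.

Hypothesis g_saturated :
  forall u v, u != v -> ~~ g u v -> has_K23 (add_edge g u v).

Lemma closed_nbhds_meet a b : deg g a = 3 -> deg g b = 3 ->
  closed_nbhd g a :&: closed_nbhd g b != set0.
Proof.
move=> deg_a deg_b.
have [a_b | a_nb] := boolP (a \in closed_nbhd g b).
  by apply/set0Pn; exists a; rewrite inE mem_closed_nbhd a_b.
have ab : a != b by apply: contraNneq a_nb => ->; exact: mem_closed_nbhd.
have gab : ~~ g a b by apply: contra a_nb => gab; rewrite in_closed_nbhd g_sym gab orbT.
have [u [w [uw common_uw]]] := has_K23_common (g_saturated ab gab).
(* The new K_{2,3} must use the edge ab, so one of its centres is a or b. *)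
wlog u_ab : u w uw common_uw / (u == a) || (u == b).
  move=> wlog_u; have [u_ab|/norP[ua ub]] := boolP ((u == a) || (u == b)).
    exact: wlog_u u w uw common_uw u_ab.
  have [w_ab|/norP[wa wb]] := boolP ((w == a) || (w == b)).
    by apply: (wlog_u w u); rewrite // 1?eq_sym // commonC.
  by move: common_uw; rewrite common_add_edge_off // ltnNge (card_common_le2 uw).
case/orP: u_ab uw common_uw => /eqP-> => [aw | bw].
  exact: closed_nbhds_meet_add_edge.
rewrite common_add_edgeC setIC; apply: closed_nbhds_meet_add_edge => //.
by rewrite eq_sym.
Qed.

Let F := deg3_closed_nbhds g.

Lemma leq_card_incident_deg v : 3 * #|incident F v| <= deg g v.
Proof.
set Fv := incident F v; set P := [set Q :\ v | Q in Fv].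
have card_P : #|P| = #|Fv|.
  apply: card_in_imset => Q1 Q2; rewrite !inE => /andP[_ v_Q1] /andP[_ v_Q2] eq_Q.
  by rewrite -(setD1K v_Q1) -(setD1K v_Q2) eq_Q.
have card_P3 A : A \in P -> #|A| = 3.
  case/imsetP=> Q; rewrite inE => /andP[/mem_deg3_closed_nbhds[a deg_a ->] v_Q] ->.
  by have := cardsD1 v (closed_nbhd g a); rewrite v_Q (card_closed_nbhd deg_a) => -[].
have triv_P : trivIset P.
  apply/trivIsetP => _ _ /imsetP[Q1 FQ1 ->] /imsetP[Q2 FQ2 ->] neq_Q.
  rewrite -setI_eq0; apply/set0Pn => -[y].
  rewrite !inE => /andP[/andP[yv y_Q1] /andP[_ y_Q2]].
  move: FQ1 FQ2; rewrite !inE => /andP[/mem_deg3_closed_nbhds[a1 deg_a1 eq_Q1] v_Q1].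
  move=> /andP[/mem_deg3_closed_nbhds[a2 deg_a2 eq_Q2] v_Q2].
  have neq_a : closed_nbhd g a1 != closed_nbhd g a2.
    by apply: contraNneq neq_Q; rewrite -eq_Q1 -eq_Q2 => ->.
  have := card_closed_nbhdI deg_a1 deg_a2 neq_a; apply/negP; rewrite -ltnNge.
  by apply/card_gt1P; exists y, v; rewrite -eq_Q1 -eq_Q2 !in_setI y_Q1 y_Q2 v_Q1 v_Q2.
have cover_P : cover P \subset [set y | g v y].
  apply/subsetP => y /bigcupP[_ /imsetP[Q FQ ->]].
  move: FQ; rewrite !inE => /andP[/mem_deg3_closed_nbhds[a deg_a ->] v_Q] /andP[yv y_Q].
  by apply: (closed_nbhd_clique deg_a) => //; rewrite eq_sym.
have := subset_leq_card cover_P; move/eqP: triv_P => <-.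
by rewrite (eq_bigr (fun _ => 3)) // sum_nat_const card_P mulnC.
Qed.

Lemma card_cover_deg3_closed_nbhds a0 : deg g a0 = 3 -> #|cover F| <= 3 * #|F| + 1.
Proof.
move=> deg_a0; set Q0 := closed_nbhd g a0.
have F_Q0 : Q0 \in F by apply/imsetP; exists a0; rewrite // inE deg_a0.
have cover_sub : cover F \subset Q0 :|: \bigcup_(Q in F :\ Q0) (Q :\: Q0).
  apply/subsetP => x /bigcupP[Q FQ xQ]; rewrite inE.
  have [//|x_nQ0] := boolP (x \in Q0).
  apply/bigcupP; exists Q; last by rewrite inE x_nQ0.
  by rewrite !inE FQ andbT; apply: contraNneq x_nQ0 => <-.
apply: leq_trans (subset_leq_card cover_sub) _.
apply: leq_trans (leq_card_setU _ _).1 _.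
rewrite (card_closed_nbhd deg_a0) (cardsD1 Q0 F) F_Q0 mulnDr muln1 addnAC leq_add2l.
apply: leq_trans (leq_card_bigcup _ _) _.
rewrite mulnC -sum_nat_const; apply: leq_sum => Q.
rewrite inE => /andP[_ /mem_deg3_closed_nbhds[a deg_a ->]].
rewrite cardsD (card_closed_nbhd deg_a).
have := closed_nbhds_meet deg_a deg_a0; rewrite -card_gt0.
by case: #|_| => // k _; rewrite subSS leq_subr.
Qed.

Lemma deg_ge_incident (deg_ge3 : forall x, 3 <= deg g x) v :
  3 * #|incident F v| + 4 * (v \in ~: cover F) <= deg g v.
Proof.
rewrite inE; have [v_F | v_nF] /= := boolP (v \in cover F).
  by rewrite addn0 leq_card_incident_deg.
have -> : incident F v = set0.
  apply/setP => Q; rewrite !inE; apply: contraNF v_nF => /andP[FQ vQ].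
  by apply/bigcupP; exists Q.
rewrite cards0 ltn_neqAle deg_ge3 andbT; apply: contraNneq v_nF => deg_v.
apply/bigcupP; exists (closed_nbhd g v); last exact: mem_closed_nbhd.
by apply/imsetP; exists v; rewrite // inE -deg_v.
Qed.

End Deg3ClosedNeighbourhoods.

Unset Implicit Arguments.

Theorem lemma6p1 (n : nat) (g : rel 'I_n) :
  sat_K23_graph g ->
  min_degree_eq g 3 ->
  (forall a : 'I_n, deg g a = 3 ->
     forall x y, g a x -> g a y -> x != y -> g x y) ->
  2 * n - 2 <= nedges g.
Proof.
move=> [[g_simple [g_K23free g_saturated]] _] [deg_ge3 [a0 deg_a0]] nbhd_clique.
have [g_irrefl g_sym] := g_simple.
have card_cover :=
  card_cover_deg3_closed_nbhds g_irrefl g_sym g_K23free nbhd_clique g_saturated deg_a0.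
set F := deg3_closed_nbhds g in card_cover *.
have sum_card_F : \sum_(Q in F) #|Q| = 4 * #|F|.
  rewrite mulnC -sum_nat_const; apply: eq_bigr => Q /mem_deg3_closed_nbhds[a deg_a ->].
  exact: card_closed_nbhd.
have sum_deg_ge : 3 * (4 * #|F|) + 4 * #|~: cover F| <= 2 * nedges g.
  rewrite -sum_deg // -sum_card_F -sum_card_incident -sum_mem_card !big_distrr -big_split.
  by apply: leq_sum => v _; exact: deg_ge_incident.
have := cardsC (cover F); rewrite card_ord.
lia.
Qed.
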